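(* Let $n,m$ be integers with $0<m<n$. Then $\mathcal{V}_n^m=\mathrm{span}\{\tilde\varphi_{n,k}^m:\ k=1,\ldots,n\}$ and $$\langle\tilde\varphi_{n,k}^m,\tilde\varphi_{n,h}^m\rangle_{L^2_w}=\delta_{k,h},\qquad k,h=1,\ldots,n.$$
   Context: Let $w(x)=(1-x^2)^{-1/2}$ on $[-1,1]$ and $\langle f,g\rangle_{L^2_w}=\int_{-1}^1 f(x)g(x)w(x)\,dx$. The orthonormal Chebyshev polynomials are $p_0(x)=\sqrt{1/\pi}$ and $p_r(x)=\sqrt{2/\pi}\cos(r\arccos x)$ for $r\ge1$. The Chebyshev nodes are $x_k^n=\cos\frac{(2k-1)\pi}{2n}$, $k=1,\ldots,n$. For $0<m<n$ set $\mu_{n,r}^m=1$ if $0\le r\le n-m$, $\mu_{n,r}^m=\frac{m+n-r}{2m}$ if $n-m<r<n+m$, and $\mu_{n,r}^m=0$ otherwise. For $r=0,\ldots,n-1$ define $q_{n,r}^m=p_r$ if $0\le r\le n-m$, and $q_{n,r}^m=\mu_{n,r}^m p_r-\mu_{n,2n-r}^m p_{2n-r}$ if $n-m<r<n$; set $\nu_{n,r}^m=1$ if $0\le r\le n-m$ and $\nu_{n,r}^m=\frac{m^2+(n-r)^2}{2m^2}$ if $n-m<r<n$. The space $\mathcal{V}_n^m$ is $\mathrm{span}\{q_{n,r}^m: r=0,\ldots,n-1\}$ (equivalently, the span of the VP polynomials $\Phi_{n,k}^m(x)=\frac{\pi}{n}\sum_{r=0}^{n+m-1}\mu_{n,r}^m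 p_r(x_k^n)p_r(x)$, $k=1,\ldots,n$). Define $\tau_{r,k}^n=\sqrt{\frac{\pi}{n\,\nu_{n,r}^m}}\,p_r(x_k^n)$ and the orthonormal VP scaling functions $\tilde\varphi_{n,k}^m(x)=\sum_{r=0}^{n-1}\tau_{r,k}^n q_{n,r}^m(x)$, $k=1,\ldots,n$. *)

From Stdlib Require Import Reals Lra Lia.
From Coquelicot Require Import Coquelicot.
Open Scope R_scope.

Fixpoint sumR (n : nat) (f : nat -> R) : R :=
  match n with
  | O => 0
  | S k => sumR k f + f k
  end.

Definition cheb_w (x : R) : R := / sqrt (1 - x ^ 2).

Definition cheb_p (r : nat) (x : R) : R :=
  match r with
  | O => sqrt (1 / PI)
  | _ => sqrt (2 / PI) * cos (INR r * acos x)
  end.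

Definition cheb_node (n k : nat) : R :=
  cos ((2 * INR k - 1) * PI / (2 * INR n)).

Definition vp_mu (n m r : nat) : R :=
  if (r <=? n - m)%nat then 1
  else if (r <? n + m)%nat then (INR m + INR n - INR r) / (2 * INR m)
  else 0.

Definition vp_q (n m r : nat) (x : R) : R :=
  if (r <=? n - m)%nat then cheb_p r x
  else vp_mu n m r * cheb_p r x
       - vp_mu n m (2 * n - r) * cheb_p (2 * n - r) x.

Definition vp_nu (n m r : nat) : R :=
  if (r <=? n - m)%nat then 1
  else (INR m ^ 2 + (INR n - INR r) ^ 2) / (2 * INR m ^ 2).

Definition vp_tau (n m r k : nat) : R :=
  sqrt (PI / (INR n * vp_nu n m r)) * cheb_p r (cheb_node n k).

Definition vp_phi (n m k : nat) (x : R) : R :=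
  sumR n (fun r => vp_tau n m r k * vp_q n m r x).

Definition in_Vnm (n m : nat) (f : R -> R) : Prop :=
  exists c : nat -> R, forall x, -1 <= x <= 1 ->
    f x = sumR n (fun r => c r * vp_q n m r x).

Definition in_span_phi (n m : nat) (f : R -> R) : Prop :=
  exists c : nat -> R, forall x, -1 <= x <= 1 ->
    f x = sumR n (fun i => c i * vp_phi n m (S i) x).

(* Under x = cos t the weight w turns <p_a, p_b> into an integral over [0, PI] of
   cos(a t) cos(b t), so the p_r are orthonormal.  Writing q_r = alpha_r p_r + beta_r p_(2n-r)
   with alpha_r^2 + beta_r^2 = nu_r, and noting that for r, s < n the indices r, 2n-r, s, 2n-s
   coincide only when r = s, the q_r are orthogonal with <q_r, q_r> = nu_r.

   At the Chebyshev nodes the cosines satisfy discrete orthogonality relations (by telescoping):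
   sum_k p_r(x_k) p_s(x_k) = (n/PI) delta_rs and sum_r p_r(x_k) p_r(x_h) = (n/PI) delta_kh.
   Hence sum_k tau_rk tau_sk = delta_rs / nu_r, which gives q_r = sum_k nu_r tau_rk phi_k and so
   the equality of the spans, and sum_r nu_r tau_rk tau_rh = delta_kh, which is exactly
   <phi_k, phi_h> = delta_kh. *)

From Stdlib Require Import Reals Lra Lia.
From Coquelicot Require Import Coquelicot.
Open Scope R_scope.

(** * Finite sums *)

Lemma sumR_ext N f g : (forall i, (i < N)%nat -> f i = g i) -> sumR N f = sumR N g.
Proof.
  induction N as [|N IH]; intros H; simpl; [reflexivity|].
  rewrite IH, H; [reflexivity | lia | intros; apply H; lia].
Qed.

Lemma sumR_plus N f g : sumR N (fun i => f i + g i) = sumR N f + sumR N g.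
Proof. induction N as [|N IH]; simpl; [ring | rewrite IH; ring]. Qed.

Lemma sumR_mult_l N c f : c * sumR N f = sumR N (fun i => c * f i).
Proof. induction N as [|N IH]; simpl; [ring | rewrite <- IH; ring]. Qed.

Lemma sumR_mult_r N c f : sumR N f * c = sumR N (fun i => f i * c).
Proof. induction N as [|N IH]; simpl; [ring | rewrite <- IH; ring]. Qed.

Lemma sumR_const N c : sumR N (fun _ => c) = INR N * c.
Proof. induction N as [|N IH]; simpl sumR; [simpl; ring | rewrite IH, S_INR; ring]. Qed.

Lemma sumR_swap N M F :
  sumR N (fun i => sumR M (fun j => F i j)) = sumR M (fun j => sumR N (fun i => F i j)).
Proof.
  induction N as [|N IH]; simpl.
  - rewrite sumR_const. ring.
  - rewrite IH, <- sumR_plus. reflexivity.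
Qed.

Lemma sumR_mul_sumR N M f g :
  sumR N f * sumR M g = sumR N (fun i => sumR M (fun j => f i * g j)).
Proof. rewrite sumR_mult_r. apply sumR_ext. intros i _. apply sumR_mult_l. Qed.

Lemma sumR_lincomb_lincomb N M (c : nat -> R) (a : nat -> nat -> R) (g : nat -> R) :
  sumR N (fun i => c i * sumR M (fun j => a i j * g j))
  = sumR M (fun j => sumR N (fun i => c i * a i j) * g j).
Proof.
  rewrite (sumR_ext N _ (fun i => sumR M (fun j => c i * a i j * g j))).
  - rewrite sumR_swap. apply sumR_ext. intros j _. rewrite sumR_mult_r. reflexivity.
  - intros i _. rewrite sumR_mult_l. apply sumR_ext. intros j _. ring.
Qed.

Lemma sumR_delta N i (v : nat -> R) :
  (i < N)%nat -> sumR N (fun j => if (i =? j)%nat then v j else 0) = v i.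
Proof.
  induction N as [|N IH]; intros Hi; [lia|]. simpl.
  destruct (Nat.eqb_spec i N) as [<-|Hne].
  - rewrite (sumR_ext _ _ (fun _ => 0)), sumR_const; [ring|].
    intros j Hj. destruct (Nat.eqb_spec i j); [lia | reflexivity].
  - rewrite IH by lia. ring.
Qed.

(** * Improper integrals over an open interval *)

Section GeneralizedIntegral.
Context {Fa Fb : (R -> Prop) -> Prop} {FFa : Filter Fa} {FFb : Filter Fb}.

Lemma is_RInt_gen_zero : is_RInt_gen (fun _ => 0) Fa Fb 0.
Proof.
  apply is_RInt_gen_ext with (Derive (fun _ => 0)).
  { apply filter_forall. intros ab x _. apply Derive_const. }
  enough (H : is_RInt_gen (Derive (fun _ => 0)) Fa Fb (0 - 0))
    by (rewrite Rminus_diag in H; exact H).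
  apply (is_RInt_gen_Derive (fun _ => 0) 0 0); try apply filterlim_const.
  - apply filter_forall. intros ab x _. apply ex_derive_const.
  - apply filter_forall. intros ab x _.
    apply continuous_ext with (fun _ => 0); [intros; symmetry; apply Derive_const|].
    apply continuous_const.
Qed.

Lemma is_RInt_gen_sumR N (f : nat -> R -> R) (l : nat -> R) :
  (forall i, (i < N)%nat -> is_RInt_gen (f i) Fa Fb (l i)) ->
  is_RInt_gen (fun x => sumR N (fun i => f i x)) Fa Fb (sumR N l).
Proof.
  induction N as [|N IH]; intros H; simpl.
  - exact is_RInt_gen_zero.
  - apply (is_RInt_gen_plus (fun x => sumR N (fun i => f i x)) (f N)).
    + apply IH. intros i Hi. apply H. lia.
    + apply H. lia.
Qed.

End GeneralizedIntegral.

Lemma segment_in_open_interval a b :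
  a < b -> filter_prod (at_right a) (at_left b)
    (fun uv => forall x, Rmin (fst uv) (snd uv) <= x <= Rmax (fst uv) (snd uv) -> a < x < b).
Proof.
  intros Hab. assert (Hba : 0 < b - a) by lra.
  apply Filter_prod with (fun u => a < u < b) (fun v => a < v < b).
  - exists (mkposreal _ Hba). intros y Hy Hay.
    change (Rabs (y - a) < b - a) in Hy. apply Rabs_def2 in Hy. lra.
  - exists (mkposreal _ Hba). intros y Hy Hyb.
    change (Rabs (y - b) < b - a) in Hy. apply Rabs_def2 in Hy. lra.
  - intros u v Hu Hv x [Hux Hxv]; simpl in *.
    pose proof (Rmin_glb_lt u v a (proj1 Hu) (proj1 Hv)).
    pose proof (Rmax_lub_lt u v b (proj2 Hu) (proj2 Hv)). lra.
Qed.

Lemma is_RInt_gen_open_ext a b (f g : R -> R) (l l' : R) :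
  a < b -> (forall x, a < x < b -> f x = g x) -> l = l' ->
  is_RInt_gen f (at_right a) (at_left b) l -> is_RInt_gen g (at_right a) (at_left b) l'.
Proof.
  intros Hab Hfg <-. apply is_RInt_gen_ext.
  generalize (segment_in_open_interval a b Hab). apply filter_imp.
  intros uv Huv x Hx. apply Hfg, Huv. lra.
Qed.

Lemma is_RInt_gen_open_Derive a b (F f : R -> R) la lb :
  a < b ->
  (forall x, a < x < b -> is_derive F x (f x)) ->
  (forall x, a < x < b -> continuous f x) ->
  filterlim F (at_right a) (locally la) -> filterlim F (at_left b) (locally lb) ->
  is_RInt_gen f (at_right a) (at_left b) (lb - la).
Proof.
  intros Hab HF Hf Hla Hlb.
  apply is_RInt_gen_open_ext with (Derive F) (lb - la); [exact Hab | | reflexivity |].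
  { intros x Hx. apply is_derive_unique, HF, Hx. }
  apply is_RInt_gen_Derive; try assumption;
    generalize (segment_in_open_interval a b Hab); apply filter_imp;
    intros uv Huv x Hx; specialize (Huv x Hx).
  - exists (f x). apply HF, Huv.
  - apply continuous_ext_loc with f; [|apply Hf, Huv].
    apply filter_imp with (fun y => a < y /\ y < b).
    + intros y Hy. symmetry. apply is_derive_unique, HF, Hy.
    + apply open_and; [apply open_gt | apply open_lt | exact Huv].
Qed.

(** * The substitution [x = cos t] *)

Lemma acos_lt_of_cos_lt y t : -1 <= y <= 1 -> 0 <= t <= PI -> cos t < y -> acos y < t.
Proof.
  intros Hy Ht Hlt. destruct (Rlt_or_le (acos y) t) as [|Hle]; [assumption|].
  pose proof (acos_bound y).
  pose proof (cos_decr_1 t (acos y) ltac:(lra) ltac:(lra) ltac:(lra) ltac:(lra) Hle).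
  rewrite cos_acos in *; lra.
Qed.

Lemma acos_at_left_1 : filterlim acos (at_left 1) (locally 0).
Proof.
  pose proof PI_RGT_0.
  apply filterlim_locally. intros eps.
  set (e := Rmin eps PI).
  assert (He : 0 < e <= eps /\ e <= PI).
  { split; [split|]; [apply Rmin_pos; [apply cond_pos | lra] | apply Rmin_l | apply Rmin_r]. }
  assert (Hcos : cos e < 1) by (rewrite <- cos_0; apply cos_decreasing_1; lra).
  assert (Hd : 0 < 1 - cos e) by lra.
  exists (mkposreal _ Hd). intros y Hy Hy1.
  change (Rabs (y - 1) < 1 - cos e) in Hy. apply Rabs_def2 in Hy.
  pose proof (acos_bound y). pose proof (COS_bound e).
  pose proof (acos_lt_of_cos_lt y e ltac:(lra) ltac:(lra) ltac:(lra)).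
  change (Rabs (acos y - 0) < eps). apply Rabs_def1; lra.
Qed.

Lemma acos_at_right_m1 : filterlim acos (at_right (-1)) (locally PI).
Proof.
  apply filterlim_ext with (fun y => PI - acos (- y)).
  { intros y. rewrite acos_opp. ring. }
  apply (filterlim_comp _ _ _ (fun y => acos (- y)) (fun t => PI - t) _ (locally 0)).
  - apply (filterlim_comp _ _ _ Ropp acos _ (at_left 1)); [|exact acos_at_left_1].
    intros P [eps HP]. exists eps. intros y Hy Hy1. apply HP; [|lra].
    change (Rabs (- y - 1) < eps). change (Rabs (y - -1) < eps) in Hy.
    replace (- y - 1) with (- (y - -1)) by ring. rewrite Rabs_Ropp. exact Hy.
  - assert (H := ex_derive_continuous (fun t : R => PI - t) 0 ltac:(auto_derive; auto)).
    unfold continuous in H. rewrite Rminus_0_r in H. exact H.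
Qed.

Lemma is_derive_acos x : -1 < x < 1 -> is_derive acos x (- cheb_w x).
Proof.
  intros Hx. apply is_derive_Reals.
  apply (derive_pt_eq_1 _ _ _ (derivable_pt_acos x Hx)).
  rewrite derive_pt_acos. unfold cheb_w, Rsqr, Rdiv. rewrite <- Rsqr_pow2. unfold Rsqr. ring.
Qed.

Lemma continuous_cheb_w x : -1 < x < 1 -> continuous cheb_w x.
Proof.
  intros Hx. apply (ex_derive_continuous (K := R_AbsRing) (V := R_NormedModule)).
  unfold cheb_w. auto_derive.
  assert (Hpos : 0 < 1 - x ^ 2) by nra.
  repeat split; [lra | apply Rgt_not_eq, sqrt_lt_R0, Hpos].
Qed.

Lemma is_RInt_gen_acos_subst (P : R -> R) (l : R) :
  (forall t, continuous P t) -> is_RInt P 0 PI l ->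
  is_RInt_gen (fun x => P (acos x) * cheb_w x) (at_right (-1)) (at_left 1) l.
Proof.
  intros HP Hl.
  set (G := RInt P 0).
  assert (HG : forall t, is_derive G t (P t)).
  { intros t. apply is_derive_RInt with 0; [|apply HP].
    apply filter_forall. intros u. apply RInt_correct, ex_RInt_continuous. intros; apply HP. }
  assert (HGc : forall t, continuous G t).
  { intros t. apply (ex_derive_continuous (K := R_AbsRing) (V := R_NormedModule)).
    eexists. apply HG. }
  replace l with (- G 0 - - G PI)
    by (unfold G; rewrite RInt_point, (is_RInt_unique _ _ _ _ Hl); unfold zero; simpl; ring).
  apply (is_RInt_gen_open_Derive (-1) 1 (fun x => - G (acos x))); [lra | | | |].
  - intros x Hx.
    pose proof (is_derive_opp _ _ _
      (is_derive_comp G acos x _ _ (HG _) (is_derive_acos x Hx))) as H.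
    replace (P (acos x) * cheb_w x) with (opp (scal (- cheb_w x) (P (acos x)))); [exact H|].
    unfold opp, scal; simpl; unfold mult; simpl. ring.
  - intros x Hx. apply (continuous_mult (fun y => P (acos y))); [|apply continuous_cheb_w, Hx].
    apply continuous_comp; [|apply HP].
    apply (ex_derive_continuous (K := R_AbsRing) (V := R_NormedModule)).
    eexists. apply is_derive_acos, Hx.
  - apply (filterlim_comp _ _ _ acos (fun t => - G t) _ (locally PI)); [exact acos_at_right_m1|].
    apply (continuous_opp G), HGc.
  - apply (filterlim_comp _ _ _ acos (fun t => - G t) _ (locally 0)); [exact acos_at_left_1|].
    apply (continuous_opp G), HGc.
Qed.

(** * Orthonormality of the Chebyshev polynomials *)

Definition cheb_coef (r : nat) : R := if (r =? 0)%nat then sqrt (1 / PI) else sqrt (2 / PI).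

Lemma cheb_p_cos r x : cheb_p r x = cheb_coef r * cos (INR r * acos x).
Proof. unfold cheb_coef. destruct r; simpl; [rewrite Rmult_0_l, cos_0; ring | reflexivity]. Qed.

Lemma cheb_coef_sq r : cheb_coef r * cheb_coef r = if (r =? 0)%nat then 1 / PI else 2 / PI.
Proof.
  pose proof PI_RGT_0. unfold cheb_coef.
  destruct (r =? 0)%nat; apply sqrt_sqrt; apply Rlt_le, Rdiv_lt_0_compat; lra.
Qed.

(* [M] is the integral over [0, PI] (resp. the sum over the [n] nodes) of [cos (z t)] for
   [z = 0]; nonzero frequencies contribute nothing. *)
Lemma cheb_coef_mul_kernel r s (M : R) :
  cheb_coef r * cheb_coef s
  * (((if (Z.of_nat r - Z.of_nat s =? 0)%Z then M else 0)
      + (if (Z.of_nat r + Z.of_nat s =? 0)%Z then M else 0)) / 2)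
  = if (r =? s)%nat then M / PI else 0.
Proof.
  pose proof PI_RGT_0.
  destruct (Nat.eqb_spec r s) as [<-|Hrs].
  - rewrite cheb_coef_sq, Z.sub_diag, Z.eqb_refl.
    destruct (Nat.eqb_spec r 0) as [->|Hr]; simpl; [field; lra|].
    destruct (Z.eqb_spec (Z.of_nat r + Z.of_nat r) 0); [lia | field; lra].
  - destruct (Z.eqb_spec (Z.of_nat r - Z.of_nat s) 0); [lia|].
    destruct (Z.eqb_spec (Z.of_nat r + Z.of_nat s) 0); [lia | field].
Qed.

Lemma cos_mul_cos x y : cos x * cos y = (cos (x - y) + cos (x + y)) / 2.
Proof. rewrite cos_minus, cos_plus. field. Qed.

Lemma cos_mul_cos_nat r s t :
  cos (INR r * t) * cos (INR s * t)
  = (cos (IZR (Z.of_nat r - Z.of_nat s) * t) + cos (IZR (Z.of_nat r + Z.of_nat s) * t)) / 2.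
Proof.
  rewrite cos_mul_cos, minus_IZR, plus_IZR, <- !INR_IZR_INZ.
  f_equal. f_equal; f_equal; ring.
Qed.

Lemma sin_IZR_mul_PI z : sin (IZR z * PI) = 0.
Proof. apply sin_eq_0_1. exists z. reflexivity. Qed.

Lemma is_RInt_cos_int (z : Z) :
  is_RInt (fun t => cos (IZR z * t)) 0 PI (if (z =? 0)%Z then PI else 0).
Proof.
  destruct (Z.eqb_spec z 0) as [->|Hz].
  - apply is_RInt_ext with (fun _ => 1).
    { intros t _. rewrite Rmult_0_l, cos_0. reflexivity. }
    replace PI with (scal (PI - 0) 1) at 2 by (unfold scal; simpl; unfold mult; simpl; ring).
    apply (is_RInt_const (V := R_NormedModule)).
  - assert (Hz' : IZR z <> 0) by (apply not_0_IZR, Hz).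
    replace 0 with (minus (sin (IZR z * PI) / IZR z) (sin (IZR z * 0) / IZR z)) at 2
      by (rewrite sin_IZR_mul_PI, Rmult_0_r, sin_0; unfold minus, plus, opp; simpl;
          field; exact Hz').
    apply (is_RInt_derive (fun t => sin (IZR z * t) / IZR z)).
    + intros t _. auto_derive; [exact I | field; exact Hz'].
    + intros t _. apply (ex_derive_continuous (K := R_AbsRing) (V := R_NormedModule)).
      auto_derive. exact I.
Qed.

Lemma cheb_p_orthonormal a b :
  is_RInt_gen (fun x => cheb_p a x * cheb_p b x * cheb_w x) (at_right (-1)) (at_left 1)
    (if (a =? b)%nat then 1 else 0).
Proof.
  set (zm := (Z.of_nat a - Z.of_nat b)%Z). set (zp := (Z.of_nat a + Z.of_nat b)%Z).
  set (P := fun t => cheb_coef a * cheb_coef b * ((cos (IZR zm * t) + cos (IZR zp * t)) / 2)).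
  apply is_RInt_gen_open_ext with (fun x => P (acos x) * cheb_w x)
    (cheb_coef a * cheb_coef b
     * (((if (zm =? 0)%Z then PI else 0) + (if (zp =? 0)%Z then PI else 0)) / 2)); [lra | | |].
  { intros x _. unfold P, zm, zp. rewrite !cheb_p_cos, <- cos_mul_cos_nat. ring. }
  { unfold zm, zp. rewrite cheb_coef_mul_kernel.
    destruct (a =? b)%nat; [field; apply PI_neq0 | reflexivity]. }
  apply is_RInt_gen_acos_subst.
  - intros t. apply (ex_derive_continuous (K := R_AbsRing) (V := R_NormedModule)).
    unfold P. auto_derive. exact I.
  - apply (is_RInt_ext (fun t => scal (cheb_coef a * cheb_coef b / 2)
                                   (plus (cos (IZR zm * t)) (cos (IZR zp * t))))).
    { intros t _. unfold P, scal, plus; simpl; unfold mult; simpl. field. }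
    replace (cheb_coef a * cheb_coef b * ((_ + _) / 2)) with
      (scal (cheb_coef a * cheb_coef b / 2)
         (plus (if (zm =? 0)%Z then PI else 0) (if (zp =? 0)%Z then PI else 0)))
      by (unfold scal, plus; simpl; unfold mult; simpl; field).
    apply (is_RInt_scal (V := R_NormedModule)), (is_RInt_plus (V := R_NormedModule));
      apply is_RInt_cos_int.
Qed.

(** * Discrete orthogonality at the Chebyshev nodes *)

Definition cheb_angle (n k : nat) : R := (2 * INR k - 1) * PI / (2 * INR n).

Lemma acos_cheb_node n k : (1 <= k <= n)%nat -> acos (cheb_node n k) = cheb_angle n k.
Proof.
  intros Hk. apply acos_cos.
  pose proof PI_RGT_0.
  assert (1 <= INR k <= INR n) by (split; [apply (le_INR 1) | apply le_INR]; lia).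
  unfold cheb_angle. split.
  - apply Rmult_le_pos; [nra | apply Rlt_le, Rinv_0_lt_compat; lra].
  - apply Rmult_le_reg_r with (2 * INR n); [lra|].
    unfold Rdiv. rewrite Rmult_assoc, Rinv_l by lra. nra.
Qed.

Lemma cheb_p_node n r k :
  (1 <= k <= n)%nat -> cheb_p r (cheb_node n k) = cheb_coef r * cos (INR r * cheb_angle n k).
Proof. intros Hk. rewrite cheb_p_cos, acos_cheb_node by exact Hk. reflexivity. Qed.

Lemma sin_mul_sum_cos_odd b N :
  2 * sin b * sumR N (fun i => cos ((2 * INR (S i) - 1) * b)) = sin (2 * INR N * b).
Proof.
  induction N as [|N IH]; cbn [sumR].
  - replace (2 * INR 0 * b) with 0 by (simpl; ring). rewrite sin_0. ring.
  - rewrite Rmult_plus_distr_l, IH.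
    replace (2 * INR (S N) * b) with ((2 * INR (S N) - 1) * b + b) by ring.
    replace (2 * INR N * b) with ((2 * INR (S N) - 1) * b - b) by (rewrite S_INR; ring).
    rewrite sin_plus, sin_minus. ring.
Qed.

Lemma sin_mul_sum_cos_even a N :
  2 * sin a * sumR N (fun r => cos (2 * INR r * a)) = sin ((2 * INR N - 1) * a) + sin a.
Proof.
  induction N as [|N IH]; cbn [sumR].
  - replace ((2 * INR 0 - 1) * a) with (- a) by (simpl; ring). rewrite sin_neg. ring.
  - rewrite Rmult_plus_distr_l, IH.
    replace ((2 * INR (S N) - 1) * a) with (2 * INR N * a + a) by (rewrite S_INR; ring).
    replace ((2 * INR N - 1) * a) with (2 * INR N * a - a) by ring.
    rewrite sin_plus, sin_minus. ring.
Qed.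

Lemma sin_IZR_PI_div_neq0 n z :
  (0 < Z.abs z < 2 * Z.of_nat n)%Z -> sin (IZR z * PI / (2 * INR n)) <> 0.
Proof.
  intros Hz Hsin. apply sin_eq_0_0 in Hsin as [k Hk].
  assert (HnR : 0 < INR n) by (apply lt_0_INR; lia).
  assert (Hzk : IZR z = IZR (k * (2 * Z.of_nat n))).
  { rewrite mult_IZR, mult_IZR, <- INR_IZR_INZ.
    apply Rmult_eq_reg_r with (PI / (2 * INR n)); [| apply Rgt_not_eq, Rdiv_lt_0_compat;
      [apply PI_RGT_0 | lra]].
    replace (IZR z * (PI / (2 * INR n))) with (IZR z * PI / (2 * INR n)) by (field; lra).
    rewrite Hk. field. lra. }
  apply eq_IZR in Hzk. rewrite Hzk, Z.abs_mul, (Z.abs_eq (2 * _)) in Hz by lia.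
  destruct (Z.eq_dec (Z.abs k) 0) as [E|E]; [rewrite E in Hz; lia|].
  assert (1 <= Z.abs k)%Z by lia. nia.
Qed.

Lemma sumR_cos_int_nodes n z :
  (0 < n)%nat -> (Z.abs z < 2 * Z.of_nat n)%Z ->
  sumR n (fun i => cos (IZR z * cheb_angle n (S i))) = if (z =? 0)%Z then INR n else 0.
Proof.
  intros Hn Hz. assert (HnR : 0 < INR n) by (apply lt_0_INR, Hn).
  destruct (Z.eqb_spec z 0) as [->|Hz0].
  - rewrite (sumR_ext _ _ (fun _ => 1)), sumR_const by (intros; rewrite Rmult_0_l; apply cos_0).
    ring.
  - set (b := IZR z * PI / (2 * INR n)).
    assert (Hb : sin b <> 0) by (apply sin_IZR_PI_div_neq0; lia).
    apply Rmult_eq_reg_l with (2 * sin b); [|intros H; apply Hb; lra].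
    rewrite Rmult_0_r, <- (sin_IZR_mul_PI z).
    replace (IZR z * PI) with (2 * INR n * b) by (unfold b; field; lra).
    rewrite <- sin_mul_sum_cos_odd. f_equal.
    apply sumR_ext. intros i _. f_equal. unfold b, cheb_angle. field. lra.
Qed.

Lemma sumR_cos_even_int n z :
  (0 < n)%nat -> (Z.abs z < 2 * Z.of_nat n)%Z ->
  sumR n (fun r => cos (2 * INR r * (IZR z * PI / (2 * INR n))))
  = if (z =? 0)%Z then INR n else (1 - cos (IZR z * PI)) / 2.
Proof.
  intros Hn Hz. assert (HnR : 0 < INR n) by (apply lt_0_INR, Hn).
  destruct (Z.eqb_spec z 0) as [->|Hz0].
  - rewrite (sumR_ext _ _ (fun _ => 1)), sumR_const; [ring|].
    intros r _. replace (2 * INR r * (0 * PI / (2 * INR n))) with 0 by (field; lra). apply cos_0.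
  - set (a := IZR z * PI / (2 * INR n)).
    assert (Ha : sin a <> 0) by (apply sin_IZR_PI_div_neq0; lia).
    apply Rmult_eq_reg_l with (2 * sin a); [|intros H; apply Ha; lra].
    rewrite sin_mul_sum_cos_even.
    replace ((2 * INR n - 1) * a) with (IZR z * PI - a) by (unfold a; field; lra).
    rewrite sin_minus, sin_IZR_mul_PI. field.
Qed.

Lemma cos_add_odd_PI x h : cos (x + (2 * INR h - 1) * PI) = - cos x.
Proof.
  replace (x + (2 * INR h - 1) * PI) with ((x - PI) + 2 * INR h * PI) by ring.
  rewrite cos_period, cos_minus, cos_PI, sin_PI. ring.
Qed.

Lemma sumR_cheb_coef_sq N (g : nat -> R) :
  sumR (S N) (fun r => cheb_coef r * cheb_coef r * g r) = 2 / PI * sumR (S N) g - g O / PI.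
Proof.
  pose proof PI_neq0.
  induction N as [|N IH].
  - simpl. rewrite cheb_coef_sq. simpl. field. exact H.
  - change (sumR (S (S N)) ?f) with (sumR (S N) f + f (S N)).
    change (sumR (S (S N)) g) with (sumR (S N) g + g (S N)).
    rewrite IH, cheb_coef_sq. simpl Nat.eqb. cbv iota. field. exact H.
Qed.

Lemma cheb_p_nodes_orthogonal n r s :
  (r < n)%nat -> (s < n)%nat ->
  sumR n (fun i => cheb_p r (cheb_node n (S i)) * cheb_p s (cheb_node n (S i)))
  = if (r =? s)%nat then INR n / PI else 0.
Proof.
  intros Hr Hs. rewrite <- cheb_coef_mul_kernel.
  rewrite (sumR_ext _ _ (fun i => cheb_coef r * cheb_coef s *
    ((cos (IZR (Z.of_nat r - Z.of_nat s) * cheb_angle n (S i))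
      + cos (IZR (Z.of_nat r + Z.of_nat s) * cheb_angle n (S i))) / 2))).
  - rewrite <- sumR_mult_l. f_equal. unfold Rdiv.
    rewrite <- sumR_mult_r, sumR_plus, !sumR_cos_int_nodes by lia. reflexivity.
  - intros i Hi. rewrite !cheb_p_node, <- cos_mul_cos_nat by lia. ring.
Qed.

Lemma cheb_p_node_mul n r k h :
  (1 <= k <= n)%nat -> (1 <= h <= n)%nat ->
  cheb_p r (cheb_node n k) * cheb_p r (cheb_node n h)
  = cheb_coef r * cheb_coef r
    * (/ 2 * (cos (2 * INR r * (IZR (Z.of_nat k - Z.of_nat h) * PI / (2 * INR n)))
              + cos (2 * INR r * (IZR (Z.of_nat k + Z.of_nat h - 1) * PI / (2 * INR n))))).
Proof.
  intros Hk Hh. assert (HnR : 0 < INR n) by (apply lt_0_INR; lia).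
  rewrite !cheb_p_node by assumption.
  transitivity (cheb_coef r * cheb_coef r
                * (cos (INR r * cheb_angle n k) * cos (INR r * cheb_angle n h))); [ring|].
  rewrite cos_mul_cos, !minus_IZR, plus_IZR, <- !INR_IZR_INZ.
  replace (INR r * cheb_angle n k - INR r * cheb_angle n h)
    with (2 * INR r * ((INR k - INR h) * PI / (2 * INR n))) by (unfold cheb_angle; field; lra).
  replace (INR r * cheb_angle n k + INR r * cheb_angle n h)
    with (2 * INR r * ((INR k + INR h - 1) * PI / (2 * INR n))) by (unfold cheb_angle; field; lra).
  field.
Qed.

Lemma cheb_p_nodes_orthogonal_dual n k h :
  (1 <= k <= n)%nat -> (1 <= h <= n)%nat ->
  sumR n (fun r => cheb_p r (cheb_node n k) * cheb_p r (cheb_node n h))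
  = if (k =? h)%nat then INR n / PI else 0.
Proof.
  intros Hk Hh. pose proof PI_RGT_0.
  assert (HnR : 0 < INR n) by (apply lt_0_INR; lia).
  rewrite (sumR_ext _ _ _ (fun r _ => cheb_p_node_mul n r k h Hk Hh)).
  set (zm := (Z.of_nat k - Z.of_nat h)%Z). set (zp := (Z.of_nat k + Z.of_nat h - 1)%Z).
  destruct n as [|n']; [lia|]. rewrite sumR_cheb_coef_sq. set (n := S n') in *.
  rewrite <- sumR_mult_l, sumR_plus, !sumR_cos_even_int by lia.
  simpl INR. rewrite !Rmult_0_r, !Rmult_0_l, cos_0.
  assert (Hzp : (zp =? 0)%Z = false) by (apply Z.eqb_neq; lia). rewrite Hzp.
  assert (Hodd : cos (IZR zp * PI) = - cos (IZR zm * PI)).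
  { rewrite <- cos_add_odd_PI with (h := h). f_equal.
    unfold zp, zm. rewrite !minus_IZR, plus_IZR, <- !INR_IZR_INZ. ring. }
  rewrite Hodd.
  destruct (Nat.eqb_spec k h) as [<-|Hkh].
  - assert (Hzm : zm = 0%Z) by (unfold zm; lia). rewrite Hzm. simpl Z.eqb.
    rewrite Rmult_0_l, cos_0. field. lra.
  - assert (Hzm : (zm =? 0)%Z = false) by (apply Z.eqb_neq; unfold zm; lia). rewrite Hzm.
    field. lra.
Qed.

(** * The VP basis *)

Section VPBasis.
Variables n m : nat.
Hypothesis m_gt0 : (0 < m)%nat.

Definition vp_alpha r := if (r <=? n - m)%nat then 1 else vp_mu n m r.
Definition vp_beta r := if (r <=? n - m)%nat then 0 else - vp_mu n m (2 * n - r).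

Lemma vp_q_cheb_p r x :
  vp_q n m r x = vp_alpha r * cheb_p r x + vp_beta r * cheb_p (2 * n - r) x.
Proof. unfold vp_q, vp_alpha, vp_beta. destruct (r <=? n - m)%nat; ring. Qed.

Lemma vp_alpha_beta_sq r :
  (r < n)%nat -> vp_alpha r * vp_alpha r + vp_beta r * vp_beta r = vp_nu n m r.
Proof.
  intros Hr. unfold vp_alpha, vp_beta, vp_nu, vp_mu.
  destruct (Nat.leb_spec0 r (n - m)); [ring|].
  destruct (Nat.leb_spec0 r (n - m)); [lia|].
  destruct (Nat.leb_spec0 (2 * n - r) (n - m)); [lia|].
  destruct (Nat.ltb_spec0 r (n + m)); [|lia].
  destruct (Nat.ltb_spec0 (2 * n - r) (n + m)); [|lia].
  rewrite minus_INR, mult_INR by lia. simpl INR.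
  assert (0 < INR m) by (apply lt_0_INR, m_gt0). field. lra.
Qed.

Lemma vp_nu_gt0 r : 0 < vp_nu n m r.
Proof.
  unfold vp_nu. destruct (r <=? n - m)%nat; [lra|].
  assert (0 < INR m) by (apply lt_0_INR, m_gt0).
  pose proof (pow2_ge_0 (INR n - INR r)).
  apply Rdiv_lt_0_compat; nra.
Qed.

Lemma vp_q_orthogonal r s :
  (r < n)%nat -> (s < n)%nat ->
  is_RInt_gen (fun x => vp_q n m r x * vp_q n m s x * cheb_w x) (at_right (-1)) (at_left 1)
    (if (r =? s)%nat then vp_nu n m r else 0).
Proof.
  intros Hr Hs.
  set (r' := (2 * n - r)%nat). set (s' := (2 * n - s)%nat).
  pose proof (is_RInt_gen_plus _ _ _ _
    (is_RInt_gen_plus _ _ _ _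
       (is_RInt_gen_scal _ (vp_alpha r * vp_alpha s) _ (cheb_p_orthonormal r s))
       (is_RInt_gen_scal _ (vp_alpha r * vp_beta s) _ (cheb_p_orthonormal r s')))
    (is_RInt_gen_plus _ _ _ _
       (is_RInt_gen_scal _ (vp_beta r * vp_alpha s) _ (cheb_p_orthonormal r' s))
       (is_RInt_gen_scal _ (vp_beta r * vp_beta s) _ (cheb_p_orthonormal r' s')))) as H.
  revert H. apply is_RInt_gen_open_ext; [lra | |].
  { intros x _. unfold scal, plus; simpl; unfold mult, plus; simpl.
    rewrite !vp_q_cheb_p. fold r' s'. ring. }
  unfold scal, plus; simpl; unfold mult, plus; simpl.
  rewrite (proj2 (Nat.eqb_neq r s')), (proj2 (Nat.eqb_neq r' s)) by lia.
  destruct (Nat.eqb_spec r s) as [<-|Hrs].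
  - rewrite Nat.eqb_refl, <- vp_alpha_beta_sq by exact Hr. ring.
  - rewrite (proj2 (Nat.eqb_neq r' s')) by lia. ring.
Qed.

Lemma vp_tau_rows r s :
  (r < n)%nat -> (s < n)%nat ->
  sumR n (fun i => vp_tau n m r (S i) * vp_tau n m s (S i))
  = if (r =? s)%nat then / vp_nu n m r else 0.
Proof.
  intros Hr Hs. unfold vp_tau.
  rewrite (sumR_ext _ _ (fun i =>
    sqrt (PI / (INR n * vp_nu n m r)) * sqrt (PI / (INR n * vp_nu n m s))
    * (cheb_p r (cheb_node n (S i)) * cheb_p s (cheb_node n (S i))))) by (intros; ring).
  rewrite <- sumR_mult_l, cheb_p_nodes_orthogonal by assumption.
  destruct (Nat.eqb_spec r s) as [<-|]; [|ring].
  pose proof PI_RGT_0. pose proof (vp_nu_gt0 r).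
  assert (0 < INR n) by (apply lt_0_INR; lia).
  rewrite sqrt_sqrt by (apply Rlt_le, Rdiv_lt_0_compat; nra). field. lra.
Qed.

Lemma vp_tau_cols k h :
  (1 <= k <= n)%nat -> (1 <= h <= n)%nat ->
  sumR n (fun r => vp_nu n m r * vp_tau n m r k * vp_tau n m r h)
  = if (k =? h)%nat then 1 else 0.
Proof.
  intros Hk Hh. pose proof PI_RGT_0.
  assert (0 < INR n) by (apply lt_0_INR; lia).
  rewrite (sumR_ext _ _ (fun r =>
    PI / INR n * (cheb_p r (cheb_node n k) * cheb_p r (cheb_node n h)))).
  - rewrite <- sumR_mult_l, cheb_p_nodes_orthogonal_dual by assumption.
    destruct (k =? h)%nat; [field; lra | ring].
  - intros r _. unfold vp_tau. pose proof (vp_nu_gt0 r).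
    transitivity (sqrt (PI / (INR n * vp_nu n m r)) * sqrt (PI / (INR n * vp_nu n m r))
                  * vp_nu n m r * (cheb_p r (cheb_node n k) * cheb_p r (cheb_node n h)));
      [ring|].
    rewrite sqrt_sqrt by (apply Rlt_le, Rdiv_lt_0_compat; nra). field. lra.
Qed.

Lemma vp_q_lincomb_phi r x :
  (r < n)%nat ->
  vp_q n m r x = sumR n (fun i => vp_nu n m r * vp_tau n m r (S i) * vp_phi n m (S i) x).
Proof.
  intros Hr. unfold vp_phi. rewrite sumR_lincomb_lincomb.
  rewrite (sumR_ext _ _ (fun s => if (r =? s)%nat then vp_q n m s x else 0)).
  - symmetry. apply sumR_delta, Hr.
  - intros s Hs.
    rewrite (sumR_ext _ _ (fun i => vp_nu n m r * (vp_tau n m r (S i) * vp_tau n m s (S i))))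
      by (intros; ring).
    rewrite <- sumR_mult_l, vp_tau_rows by assumption.
    destruct (Nat.eqb_spec r s) as [<-|]; [|ring].
    pose proof (vp_nu_gt0 r). field. lra.
Qed.

Lemma in_Vnm_of_in_span_phi f : in_span_phi n m f -> in_Vnm n m f.
Proof.
  intros [c Hc]. exists (fun r => sumR n (fun i => c i * vp_tau n m r (S i))).
  intros x Hx. rewrite Hc by exact Hx. apply sumR_lincomb_lincomb.
Qed.

Lemma in_span_phi_of_in_Vnm f : in_Vnm n m f -> in_span_phi n m f.
Proof.
  intros [c Hc]. exists (fun i => sumR n (fun r => c r * (vp_nu n m r * vp_tau n m r (S i)))).
  intros x Hx. rewrite Hc by exact Hx. rewrite <- sumR_lincomb_lincomb.
  apply sumR_ext. intros r Hr. rewrite vp_q_lincomb_phi by exact Hr. reflexivity.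
Qed.

Lemma vp_phi_orthonormal k h :
  (1 <= k <= n)%nat -> (1 <= h <= n)%nat ->
  is_RInt_gen (fun x => vp_phi n m k x * vp_phi n m h x * cheb_w x) (at_right (-1)) (at_left 1)
    (if (k =? h)%nat then 1 else 0).
Proof.
  intros Hk Hh.
  assert (H : is_RInt_gen
    (fun x => sumR n (fun r => sumR n (fun s =>
       vp_tau n m r k * vp_tau n m s h * (vp_q n m r x * vp_q n m s x * cheb_w x))))
    (at_right (-1)) (at_left 1)
    (sumR n (fun r => sumR n (fun s =>
       vp_tau n m r k * vp_tau n m s h * (if (r =? s)%nat then vp_nu n m r else 0))))).
  { apply is_RInt_gen_sumR. intros r Hr. apply is_RInt_gen_sumR. intros s Hs.
    apply (is_RInt_gen_scal (V := R_NormedModule)), vp_q_orthogonal; assumption. }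
  revert H. apply is_RInt_gen_open_ext; [lra | |].
  - intros x _. unfold vp_phi. rewrite sumR_mul_sumR, sumR_mult_r. apply sumR_ext. intros r _.
    rewrite sumR_mult_r. apply sumR_ext. intros s _. ring.
  - rewrite <- vp_tau_cols by assumption. apply sumR_ext. intros r Hr.
    rewrite (sumR_ext _ _ (fun s =>
      if (r =? s)%nat then vp_tau n m r k * vp_tau n m s h * vp_nu n m r else 0)).
    + rewrite sumR_delta by exact Hr. ring.
    + intros s _. destruct (r =? s)%nat; ring.
Qed.

End VPBasis.

Theorem proposition1 (n m : nat) (Hm : (0 < m)%nat) (Hmn : (m < n)%nat) :
  (forall f : R -> R, in_Vnm n m f <-> in_span_phi n m f) /\
  (forall k h : nat, (1 <= k <= n)%nat -> (1 <= h <= n)%nat ->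
     is_RInt_gen (fun x => vp_phi n m k x * vp_phi n m h x * cheb_w x)
       (at_right (-1)) (at_left 1)
       (if Nat.eqb k h then 1 else 0)).
Proof.
  split.
  - intros f. split; [apply in_span_phi_of_in_Vnm | apply in_Vnm_of_in_span_phi]; assumption.
  - intros k h Hk Hh. apply vp_phi_orthonormal; assumption.
Qed.
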